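(* Let $G$ be the corresponding graph of an array $A$ with reach one and let $F$ be a resulting DFS forest of $G$. Let $H=F$ if all components of $F$ are directed paths; otherwise let $H$ be the graph obtained by merging the sub-trees of $F$. Let $H_1$ and $H_2$ be two distinct components of $H$, and apply the component merge to $H_1$ and $H_2$. Then the resulting graph contains a directed Hamiltonian path of the merged component, i.e. a directed path visiting every vertex of $V(H_1)\cup V(H_2)$ exactly once.
   Context: An array is a finite sequence $A=(A[1],\dots,A[n])$ of pairwise distinct real numbers. The corresponding graph of $A$ with reach one is the directed graph on $\{1,\dots,n\}$ with an arc $(i,j)$ whenever $j\equiv i\pm1\pmod n$, $j\ne i$, and $A[i]<A[j]$. DFS is run with adjacency lists sorted in increasing $A$-value and a visiting list containing all vertices; the resulting DFS forest consists of the arcs $(\mathrm{parent}(w),w)$ along which DFS discovers vertices; components are components of the underlying undirected graph, each a rooted tree. Merging the sub-trees of $F$: for each component of $F$ whose root has exactly two children $a_1,b_1$, set $p=a_1$, $q=b_1$ and, while both are defined: if $A[p]<A[q]$ add the arc $(p,q)$ and replace $p$ by its smallest-valued child in $F$ (undefined if none); otherwise add the arc $(q,p)$ and replace $q$ by its smallest-valued child in $F$ (undefined if none). Component merge of two distinct components $C,D$: set $p,q$ to the minimum-valued vertices of $C,D$; while both are defined: if $A[p]<A[q]$ add the arc $(p,q)$ and replace $p$ by the smallest-valued out-neighbour of $p$ within $C$ (ignoring arcs added during this merge; undefined if none); otherwise add $(q,p)$ and replace $q$ analogously within $D$. *)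

(* Vertices of an array of length n are 'I_n (0-based). *)
From HB Require Import structures.
From mathcomp Require Import all_boot all_order all_algebra.
From mathcomp Require Import reals.
Set Implicit Arguments. Unset Strict Implicit. Unset Printing Implicit Defensive.
Import Order.TTheory GRing.Theory Num.Theory.
Local Open Scope ring_scope.

Definition arcrel (T : eqType) (E : seq (T * T)) : rel T := fun x y => (x, y) \in E.
Definition symarc (T : eqType) (E : seq (T * T)) : rel T :=
  fun x y => arcrel E x y || arcrel E y x.

Section ArrayGraphs.
Variables (R : realType) (n : nat) (A : 'I_n -> R).
Local Notation V := 'I_n.

Definition reach1_arc (i j : V) : bool :=
  [&& j != i, (val j == (val i).+1 %% n)%N || (val i == (val j).+1 %% n)%N
    & A i < A j].

Definition sort_by_val (s : seq V) : seq V := sort (fun a b : V => A a <= A b) s.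
Definition min_by_val (s : seq V) : option V := ohead (sort_by_val s).

Definition adj (v : V) : seq V := sort_by_val [seq w <- enum V | reach1_arc v w].

(* DFS visit from v; returns (visited vertices, discovery arcs (parent w, w)) *)
Fixpoint dfs_visit (fuel : nat) (vis : seq V) (v : V) : seq V * seq (V * V) :=
  match fuel with
  | 0 => (vis, [::])
  | f.+1 =>
    foldl (fun (st : seq V * seq (V * V)) w =>
             if w \in st.1 then st
             else let r := dfs_visit f st.1 w in (r.1, st.2 ++ (v, w) :: r.2))
          (v :: vis, [::]) (adj v)
  end.

Definition dfs_forest (order : seq V) : seq (V * V) :=
  (foldl (fun (st : seq V * seq (V * V)) v =>
            if v \in st.1 then st
            else let r := dfs_visit n.+1 st.1 v in (r.1, st.2 ++ r.2))
         ([::], [::]) order).2.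

(* the two-pointer merging loop shared by both merge procedures *)
Fixpoint zigzag (nextp nextq : V -> option V) (fuel : nat) (p q : V)
  : seq (V * V) :=
  match fuel with
  | 0 => [::]
  | f.+1 =>
    if A p < A q then
      (p, q) :: (if nextp p is Some p' then zigzag nextp nextq f p' q else [::])
    else
      (q, p) :: (if nextq q is Some q' then zigzag nextp nextq f p q' else [::])
  end.

Definition children (F : seq (V * V)) (v : V) : seq V :=
  [seq w <- enum V | arcrel F v w].
Definition is_root (F : seq (V * V)) (r : V) : bool :=
  ~~ has (fun e : V * V => e.2 == r) F.

Definition merge_subtrees (F : seq (V * V)) : seq (V * V) :=
  let nxt := fun v => min_by_val (children F v) in
  F ++ flatten [seq match children F r with
                    | [:: a; b] => zigzag nxt nxt n a b
                    | _ => [::] end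
               | r <- enum V & is_root F r].

Definition comp_merge_arcs (H : seq (V * V)) (C D : {set V}) : seq (V * V) :=
  let nextC := fun v => min_by_val [seq w <- enum V | arcrel H v w & w \in C] in
  let nextD := fun v => min_by_val [seq w <- enum V | arcrel H v w & w \in D] in
  match min_by_val (enum C), min_by_val (enum D) with
  | Some p, Some q => zigzag nextC nextD n p q
  | _, _ => [::]
  end.

End ArrayGraphs.

Section Components.
Variable n : nat.
Local Notation V := 'I_n.

Definition comp_of (E : seq (V * V)) (x : V) : {set V} :=
  [set y | connect (symarc E) x y].
Definition is_component (E : seq (V * V)) (C : {set V}) : Prop :=
  exists x, C = comp_of E x.

Definition comp_is_dipath (E : seq (V * V)) (C : {set V}) : Prop :=
  exists s : seq V,
    [/\ uniq s, forall x, (x \in s) = (x \in C)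
      & forall x y, x \in C -> arcrel E x y = ((x, y) \in zip s (behead s))].

Definition all_comps_dipaths (E : seq (V * V)) : Prop :=
  forall C, is_component E C -> comp_is_dipath E C.
End Components.

(* Every DFS arc joins cyclic neighbours and increases the value, and every vertex is
   discovered at most once, so it has at most one parent.  A vertex has only two cyclic
   neighbours, hence a vertex with a parent has at most one child and a root at most
   two: each component of F is a root with at most two increasing chains hanging from
   it.  Merging the sub-trees interleaves the two chains by value, so every component
   of H is traced by a path along which the value increases.  Along such a path the
   smallest-valued out-neighbour of a vertex inside its component is its successor, so
   the component merge walks the paths of H1 and H2, and its arcs splice them into one
   path through all of V(H1) and V(H2), in increasing order of value. *)

From HB Require Import structures.
From mathcomp Require Import all_boot all_order all_algebra.
From mathcomp Require Import reals zify.
From Stdlib Require Import Classical.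
Import Order.TTheory GRing.Theory Num.Theory.
Local Open Scope ring_scope.

Set Implicit Arguments. Unset Strict Implicit. Unset Printing Implicit Defensive.

Lemma sub_arcrel (T : eqType) (X Y : seq (T * T)) :
  {subset X <= Y} -> subrel (arcrel X) (arcrel Y).
Proof. by move=> sXY x y /sXY. Qed.

Lemma arcrel_cat (T : eqType) (X Y : seq (T * T)) x y :
  arcrel (X ++ Y) x y = arcrel X x y || arcrel Y x y.
Proof. by rewrite /arcrel mem_cat. Qed.

Lemma foldl_inv (S : Type) (T : eqType) (P : S -> Prop) (f : S -> T -> S) st (l : seq T) :
  (forall st x, x \in l -> P st -> P (f st x)) -> P st -> P (foldl f st l).
Proof.
elim: l st => [|x l IHl] st //= Pf Pst.
by apply: IHl => [st' y yl|]; apply: Pf; rewrite ?inE ?yl ?orbT ?eqxx.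
Qed.

Lemma uniq_snd_eq (T : eqType) (E : seq (T * T)) u u' w :
  uniq (map snd E) -> (u, w) \in E -> (u', w) \in E -> u = u'.
Proof.
elim: E => [|e E IHE] //= /andP [e_new uniqE]; rewrite !inE.
have w_notin x : e.2 = w -> (x, w) \in E -> False.
  by move=> ew xwE; move/negP: e_new; apply; rewrite ew; exact: (map_f snd xwE).
case/predU1P => [uw|uwE]; case/predU1P => [u'w|u'wE].
- by move: uw; rewrite -u'w => -[].
- by case: (w_notin u'); subst e.
- by case: (w_notin u); subst e.
- exact: IHE.
Qed.

Lemma path_parent (T : eqType) (e : rel T) x s z :
  path e x s -> z \in s -> exists2 p, p \in x :: s & e p z.
Proof.
elim: s x => [|y s IHs] x //= /andP [xy ys]; rewrite inE => /predU1P [->|zs].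
  by exists x; rewrite ?mem_head.
by have [p ps pz] := IHs y ys zs; exists p; rewrite // inE ps orbT.
Qed.

Lemma zip_path (T : eqType) (e : rel T) x s :
  (forall a b, a \in x :: s -> (a, b) \in zip (x :: s) s -> e a b) -> path e x s.
Proof.
elim: s x => [|y s IHs] x //= xs_e; rewrite xs_e ?mem_head //=.
by apply: IHs => a b a_ys ab; apply: xs_e; rewrite inE ?a_ys ?ab orbT.
Qed.

Lemma uniq_size_ord n (s : seq 'I_n) : uniq s -> (size s <= n)%N.
Proof. by move/card_uniqP <-; apply: leq_trans (max_card _) _; rewrite card_ord. Qed.

Section ByValue.
Variables (R : realType) (n : nat) (A : 'I_n -> R).
Local Notation V := 'I_n.

Variant min_by_val_spec (s : seq V) : option V -> Prop :=
  | MinByValNil of s = [::] : min_by_val_spec s None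
  | MinByValMin m of m \in s & (forall y, y \in s -> A m <= A y) :
      min_by_val_spec s (Some m).

Lemma min_by_valP (s : seq V) : min_by_val_spec s (min_by_val A s).
Proof.
rewrite /min_by_val /sort_by_val.
have s_perm : perm_eq (sort (fun a b : V => A a <= A b) s) s by rewrite perm_sort.
have s_sorted : sorted (fun a b : V => A a <= A b) (sort (fun a b : V => A a <= A b) s).
  by apply: sort_sorted => a b; exact: le_total.
case: (sort _ s) s_perm s_sorted => [|m t] /= s_perm s_sorted.
  by constructor; apply/nilP; rewrite /nilp -(perm_size s_perm).
constructor => [|y]; first by rewrite -(perm_mem s_perm) mem_head.
rewrite -(perm_mem s_perm) inE => /predU1P [->//|yt].
have le_val_trans : transitive (fun a b : V => A a <= A b) by move=> ? ? ?; apply: le_trans.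
by have /allP := order_path_min le_val_trans s_sorted; apply.
Qed.

Lemma min_by_val_mem (s : seq V) m : min_by_val A s = Some m -> m \in s.
Proof. by case: min_by_valP => // m' m's _ [<-]. Qed.

Definition lt_val : rel V := fun x y => A x < A y.

Lemma lt_val_trans : transitive lt_val.
Proof. by move=> y x z; apply: lt_trans. Qed.

Lemma increasing_uniq x s : path lt_val x s -> uniq (x :: s).
Proof.
have lt_val_irr : irreflexive lt_val by move=> y; apply: ltxx.
exact: (@sorted_uniq _ _ lt_val_trans lt_val_irr (x :: s)).
Qed.

Lemma increasing_head_lt x s y : path lt_val x s -> y \in s -> A x < A y.
Proof. by move/(order_path_min lt_val_trans)/allP; apply. Qed.

Hypothesis A_inj : injective A.

Lemma min_by_val_eq (s : seq V) m :
  m \in s -> (forall y, y \in s -> A m <= A y) -> min_by_val A s = Some m.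
Proof.
move=> ms m_min; case: min_by_valP => [s0|m' m's m'_min]; first by rewrite s0 in ms.
by congr Some; apply: A_inj; apply/eqP; rewrite eq_le m'_min ?m_min.
Qed.

End ByValue.

Definition cyc_nbrs n (v : 'I_n) : seq 'I_n := [:: ordS v; ord_pred v].

Lemma reach1_arc_nbrs (R : realType) n (A : 'I_n -> R) u w :
  reach1_arc A u w -> (w \in cyc_nbrs u) /\ (u \in cyc_nbrs w).
Proof.
case/and3P => _ /orP adj_uw _.
have [] : (w == ordS u) \/ (u == ordS w) by case: adj_uw; [left | right].
  by move/eqP->; rewrite !inE ordSK !eqxx !orbT.
by move/eqP->; rewrite !inE ordSK !eqxx !orbT.
Qed.

Lemma size_nbrs n (v : 'I_n) s : uniq s -> {subset s <= cyc_nbrs v} -> (size s <= 2)%N.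
Proof. exact: uniq_leq_size. Qed.

Section Zigzag.
Variables (R : realType) (n : nat) (A : 'I_n -> R).
Local Notation V := 'I_n.

Fixpoint trail (nx : V -> option V) (x : V) (s : seq V) : Prop :=
  if s is y :: s' then nx x = Some y /\ trail nx y s' else nx x = None.

Lemma trail_next nx x s u c : trail nx x s -> u \in x :: s -> nx u = Some c -> c \in s.
Proof.
elim: s x => [|y s IHs] x /=.
  by move=> nx_x; rewrite inE => /eqP ->; rewrite nx_x.
move=> [nx_x tr_y]; rewrite inE => /predU1P [->|us] nx_u.
  by move: nx_u; rewrite nx_x => -[->]; rewrite mem_head.
by rewrite inE (IHs y tr_y us nx_u) orbT.
Qed.

Lemma zigzag_path (X : seq (V * V)) nxp nxq f p s q t :
  trail nxp p s -> trail nxq q t -> path (arcrel X) p s -> path (arcrel X) q t ->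
  (size s + size t < f)%N ->
  exists u, perm_eq ((if A p < A q then p else q) :: u) (p :: s ++ q :: t) /\
    path (arcrel (X ++ zigzag A nxp nxq f p q)) (if A p < A q then p else q) u.
Proof.
elim: f p s q t => [|f IHf] p s q t // tr_p tr_q X_p X_q size_lt /=.
have sub_X Z : subrel (arcrel X) (arcrel (X ++ Z)).
  by apply: sub_arcrel => e; rewrite mem_cat => ->.
have sub_Z Z e : subrel (arcrel (X ++ Z)) (arcrel (X ++ e :: Z)).
  by apply: sub_arcrel => e'; rewrite !mem_cat inE => /orP [] ->; rewrite ?orbT.
have added e Z : arcrel (X ++ e :: Z) e.1 e.2 by rewrite arcrel_cat /arcrel mem_head orbT.
case: ifP => pq.
  case: s tr_p X_p size_lt => [|y s] /= tr_p X_p size_lt.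
    by rewrite tr_p; exists (q :: t); rewrite /= added (sub_path (sub_X _)).
  case: tr_p => -> tr_y; case/andP: X_p => X_py X_y.
  have [u [perm_u path_u]] := IHf y s q t tr_y tr_q X_y X_q ltac:(lia).
  exists ((if A y < A q then y else q) :: u); rewrite perm_cons; split => //=.
  by rewrite (sub_path (sub_Z _ _) path_u) andbT; case: ifP; rewrite ?added ?sub_X.
case: t tr_q X_q size_lt => [|z t] /= tr_q X_q size_lt.
  rewrite tr_q; exists (p :: s); rewrite /= added (sub_path (sub_X _)) //.
  by rewrite cats1 -rcons_cons perm_sym perm_rcons.
case: tr_q => -> tr_z; case/andP: X_q => X_qz X_z.
have [u [perm_u path_u]] := IHf p s z t tr_p tr_z X_p X_z ltac:(lia).
exists ((if A p < A z then p else z) :: u); split.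
  by rewrite perm_sym -cat_cons -[q :: z :: t]cat1s perm_catCA /= perm_cons perm_sym.
by rewrite /= (sub_path (sub_Z _ _) path_u) andbT; case: ifP; rewrite ?added ?sub_X.
Qed.

Hypothesis A_inj : injective A.

Lemma zigzag_arc nxp nxq f p s q t e :
  trail nxp p s -> trail nxq q t -> (forall z, z \in p :: s -> z \notin q :: t) ->
  e \in zigzag A nxp nxq f p q ->
  [/\ e.1 \in p :: s ++ q :: t, e.2 \in p :: s ++ q :: t & A e.1 < A e.2].
Proof.
elim: f p s q t => [|f IHf] p s q t // tr_p tr_q disj /=.
have q_mem : q \in p :: s ++ q :: t by rewrite inE mem_cat mem_head !orbT.
case: ifP => pq; rewrite inE => /predU1P [-> | e_rec] /=.
- by rewrite mem_head q_mem.
- case: s tr_p disj e_rec {q_mem} => [|y s] /= tr_p disj; first by rewrite tr_p.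
  case: tr_p => -> tr_y e_rec.
  have disj_y z : z \in y :: s -> z \notin q :: t by move=> zs; rewrite disj // inE zs orbT.
  have [e1 e2 lt_e] := IHf y s q t tr_y tr_q disj_y e_rec.
  by split; rewrite // inE ?e1 ?e2 orbT.
- rewrite mem_head q_mem; split => //.
  have /negPf pq_neq : q != p.
    by apply: contraNneq (disj p (mem_head _ _)) => <-; exact: mem_head.
  by rewrite lt_neqAle (inj_eq A_inj) pq_neq /= leNgt pq.
- case: t tr_q disj e_rec {q_mem} => [|z t] /= tr_q disj; first by rewrite tr_q.
  case: tr_q => -> tr_z e_rec.
  have disj_z x : x \in p :: s -> x \notin z :: t.
    by move=> xs; apply: contra (disj x xs); rewrite [x \in q :: _]inE => ->; rewrite orbT.
  have [e1 e2 lt_e] := IHf p s z t tr_p tr_z disj_z e_rec.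
  have sub_mem x : x \in p :: s ++ z :: t -> x \in p :: s ++ [:: q, z & t].
    by rewrite !inE !mem_cat !inE => /or3P [] ->; rewrite ?orbT.
  by split; rewrite // sub_mem.
Qed.

End Zigzag.

Section DFS.
Variables (R : realType) (n : nat) (A : 'I_n -> R).
Local Notation V := 'I_n.

Definition discovery (old new : seq V) (E : seq (V * V)) :=
  [/\ {subset old <= new}, uniq (map snd E),
      {in E, forall e, (e.2 \notin old) && (e.2 \in new)}
    & {in E, forall e, reach1_arc A e.1 e.2}].

Lemma discovery_nil vis : discovery vis vis [::].
Proof. by split. Qed.

Lemma discovery_arc vis v w :
  w \notin vis -> reach1_arc A v w -> discovery vis (w :: vis) [:: (v, w)].
Proof.
move=> w_new vw; split=> // [x xvis|e|e]; rewrite ?inE ?xvis ?orbT // => /eqP-> //=.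
by rewrite w_new eqxx.
Qed.

Lemma discovery_cat old mid new E1 E2 :
  discovery old mid E1 -> discovery mid new E2 -> discovery old new (E1 ++ E2).
Proof.
move=> [old_mid uniq1 tgt1 arc1] [mid_new uniq2 tgt2 arc2]; split.
- by move=> x /old_mid /mid_new.
- rewrite map_cat cat_uniq uniq1 uniq2 andbT /=; apply/hasP => -[_ /mapP [e2 e2E ->]].
  case/mapP => e1 e1E e12; have /andP [/negP + _] := tgt2 e2 e2E.
  by have /andP [_ +] := tgt1 e1 e1E; rewrite e12.
- move=> e; rewrite mem_cat => /orP [/tgt1 | /tgt2] /andP [e_old e_new].
    by rewrite e_old mid_new.
  by rewrite e_new andbT; apply: contra e_old; apply: old_mid.
- by move=> e; rewrite mem_cat => /orP [/arc1 | /arc2].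
Qed.

Lemma discovery_consl v old new E : discovery (v :: old) new E -> discovery old new E.
Proof.
case=> old_new uniqE tgtE arcE; split=> // [x xold|e /tgtE].
  by apply: old_new; rewrite inE xold orbT.
by rewrite inE negb_or => /andP [/andP [_ ->] ->].
Qed.

Lemma mem_adj v w : (w \in adj A v) = reach1_arc A v w.
Proof. by rewrite /adj /sort_by_val mem_sort mem_filter mem_enum andbT. Qed.

(* DFS only descends along arcs of increasing value, so this bounds the recursion
   depth, and the fuel [n.+1] used by [dfs_forest] never runs out. *)
Definition n_above (v : V) : nat := #|[set u | A v < A u]|.

Lemma n_above_lt v w : A v < A w -> (n_above w < n_above v)%N.
Proof.
move=> vw; apply: proper_card; apply/properP; split.
  by apply/subsetP => u; rewrite !inE; apply: lt_trans.
by exists w; rewrite !inE ?vw ?ltxx.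
Qed.

Lemma dfs_visit_discovery f vis v : (n_above v < f)%N ->
  discovery (v :: vis) (dfs_visit A f vis v).1 (dfs_visit A f vis v).2.
Proof.
elim: f vis v => [|f IHf] vis v // v_above /=.
apply: (@foldl_inv _ _ (fun st => discovery (v :: vis) st.1 st.2)) => [st w|]; last first.
  exact: discovery_nil.
rewrite mem_adj => vw st_disc; case: ifP => // w_new.
have w_above : (n_above w < f)%N.
  by rewrite -ltnS; apply: leq_trans v_above; apply: n_above_lt; case/and3P: vw.
apply: discovery_cat st_disc _; rewrite -cat1s.
exact: discovery_cat (discovery_arc (negbT w_new) vw) (IHf _ _ w_above).
Qed.

Lemma dfs_forest_discovery order : exists vis, discovery [::] vis (dfs_forest A order).
Proof.
rewrite /dfs_forest; set st := foldl _ _ _; exists st.1; rewrite {}/st.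
apply: (@foldl_inv _ _ (fun st => discovery [::] st.1 st.2)) => [st v _ st_disc|]; last first.
  exact: discovery_nil.
case: ifP => // v_new.
have v_above : (n_above v < n.+1)%N.
  by rewrite ltnS; apply: leq_trans (max_card _) _; rewrite card_ord.
exact: discovery_cat st_disc (discovery_consl (dfs_visit_discovery st.1 v_above)).
Qed.

Lemma dfs_forest_reach1 order u w : arcrel (dfs_forest A order) u w -> reach1_arc A u w.
Proof. by have [_ [_ _ _ reach1F]] := dfs_forest_discovery order => /reach1F. Qed.

Lemma dfs_forest_parent_uniq order u u' w :
  arcrel (dfs_forest A order) u w -> arcrel (dfs_forest A order) u' w -> u = u'.
Proof. by have [_ [_ uniqF _ _]] := dfs_forest_discovery order; apply: uniq_snd_eq. Qed.

End DFS.

Section Components.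
Variables (n : nat) (E : seq ('I_n * 'I_n)).
Local Notation V := 'I_n.

Definition traced_components : Prop :=
  forall y, exists x s, path (arcrel E) x s /\ x :: s =i comp_of E y.

Lemma connect_symarc_sym : connect_sym (symarc E).
Proof. by apply: sym_connect_sym => x y; rewrite /symarc orbC. Qed.

Lemma comp_of_id x : x \in comp_of E x.
Proof. by rewrite inE connect0. Qed.

Lemma comp_of_eq x z : z \in comp_of E x -> comp_of E z = comp_of E x.
Proof.
rewrite inE => xz; apply/setP => y; rewrite !inE.
by rewrite (same_connect connect_symarc_sym xz).
Qed.

Lemma comp_of_disjoint x y z :
  comp_of E x != comp_of E y -> z \in comp_of E x -> z \notin comp_of E y.
Proof.
move=> xy zx; apply: contra xy => zy.
by rewrite -(comp_of_eq zx) (comp_of_eq zy).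
Qed.

Lemma dipaths_traced : all_comps_dipaths E -> traced_components.
Proof.
move=> dipaths y; have [s [_ sC arcE]] := dipaths _ (ex_intro _ y erefl).
case: s sC arcE => [|x s] sC arcE; first by have := sC y; rewrite comp_of_id.
by exists x, s; split => //; apply: zip_path => a b a_s; rewrite arcE // -sC.
Qed.

End Components.

Section Forest.
Variables (R : realType) (n : nat) (A : 'I_n -> R).
Hypothesis A_inj : injective A.
Local Notation V := 'I_n.
Variable F : seq (V * V).
Hypothesis F_reach1 : forall u w, arcrel F u w -> reach1_arc A u w.
Hypothesis F_parent_uniq : forall u u' w, arcrel F u w -> arcrel F u' w -> u = u'.

Lemma F_lt u w : arcrel F u w -> A u < A w.
Proof. by case/F_reach1/and3P. Qed.

Lemma mem_children v w : (w \in children F v) = arcrel F v w.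
Proof. by rewrite mem_filter mem_enum andbT. Qed.

Lemma uniq_children v : uniq (children F v).
Proof. exact/filter_uniq/enum_uniq. Qed.

Lemma children_nbrs v : {subset children F v <= cyc_nbrs v}.
Proof. by move=> w; rewrite mem_children => /F_reach1 /reach1_arc_nbrs []. Qed.

Lemma size_children v : (size (children F v) <= 2)%N.
Proof. exact: size_nbrs (uniq_children v) (@children_nbrs v). Qed.

(* the parent occupies one of the two cyclic neighbours *)
Lemma size_children_nonroot u v : arcrel F u v -> (size (children F v) <= 1)%N.
Proof.
move=> uv; suff: (size (u :: children F v) <= 2)%N by [].
apply: (size_nbrs (v := v)) => [|w].
  rewrite /= uniq_children andbT mem_children; apply/negP => vu.
  by have := lt_trans (F_lt uv) (F_lt vu); rewrite ltxx.
rewrite inE => /predU1P [->|/children_nbrs //].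
by have [] := reach1_arc_nbrs (F_reach1 uv).
Qed.

Definition least_child (v : V) : option V := min_by_val A (children F v).

Lemma least_child_arc v c : least_child v = Some c -> arcrel F v c.
Proof. by move/min_by_val_mem; rewrite mem_children. Qed.

Lemma least_child_nonroot u v w : arcrel F u v -> arcrel F v w -> least_child v = Some w.
Proof.
move=> uv; rewrite -mem_children /least_child; move: (size_children_nonroot uv).
case: (children F v) => [|c [|//]] // _; rewrite inE => /eqP ->.
by apply: min_by_val_eq; rewrite ?mem_head // => y; rewrite inE => /eqP ->.
Qed.

Fixpoint chain (k : nat) (v : V) : seq V :=
  if k is k'.+1 then (if least_child v is Some c then c :: chain k' c else [::]) else [::].

Lemma chain_path k v : path (arcrel F) v (chain k v).
Proof.
elim: k v => [|k IHk] v //=; case nx_v: (least_child v) => [c|] //=.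
by rewrite (least_child_arc nx_v) IHk.
Qed.

Lemma chain_uniq k v : uniq (v :: chain k v).
Proof. exact/increasing_uniq/(sub_path F_lt (chain_path k v)). Qed.

Lemma chain_trail v : trail least_child v (chain n v).
Proof.
have trail_or_full k u : trail least_child u (chain k u) \/ size (chain k u) = k.
  elim: k u => [|k IHk] u /=; first by right.
  case nx_u: (least_child u) => [c|] /=; last by left.
  by case: (IHk c) => [|->]; [left | right].
case: (trail_or_full n v) => // size_chain.
have := uniq_size_ord (chain_uniq n v).
by rewrite /= size_chain ltnn.
Qed.

Lemma is_rootP r : reflect (forall u, ~~ arcrel F u r) (is_root F r).
Proof.
apply: (iffP hasPn) => [no_arc u | no_arc e eF].
  by apply/negP => ur; have := no_arc _ ur; rewrite eqxx.
by apply/eqP => er; have := no_arc e.1; rewrite /arcrel -er -surjective_pairing eF.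
Qed.

Definition subtree (r : V) : seq V :=
  r :: flatten [seq a :: chain n a | a <- children F r].

Section Subtree.
Variable r : V.

Lemma branch_path a : a \in children F r -> path (arcrel F) r (a :: chain n a).
Proof. by rewrite mem_children /= => ->; rewrite chain_path. Qed.

Lemma root_notin_branch a : a \in children F r -> r \notin a :: chain n a.
Proof. by move/branch_path/(sub_path F_lt)/increasing_uniq/andP => []. Qed.

Lemma branch_parent a z : a \in children F r -> z \in a :: chain n a ->
  exists2 p, p \in r :: a :: chain n a & arcrel F p z.
Proof. by move/branch_path/path_parent; apply. Qed.

Lemma branch_child a z : a \in children F r -> z \in a :: chain n a -> arcrel F r z -> z = a.
Proof.
move=> ar; rewrite inE => /predU1P [//|z_chain] rz.
have [p pa pz] := path_parent (chain_path n a) z_chain.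
by move: (root_notin_branch ar); rewrite (F_parent_uniq rz pz) pa.
Qed.

(* a common vertex of smallest value would have its unique parent in both branches *)
Lemma branches_disjoint a b : a \in children F r -> b \in children F r -> a != b ->
  forall z, z \in a :: chain n a -> z \notin b :: chain n b.
Proof.
move=> ar br ab z za; apply/negP => zb.
set L := [seq x <- a :: chain n a | x \in b :: chain n b].
have zL : z \in L by rewrite mem_filter zb za.
case: (min_by_valP A L) => [L0|m]; first by rewrite L0 in zL.
rewrite mem_filter => /andP [mb ma] m_min.
have [p pa pm] := branch_parent ar ma; have [q qb qm] := branch_parent br mb.
rewrite -(F_parent_uniq pm qm) in qb.
case: (p =P r) => [pr | /eqP p_r].
  by move: ab; rewrite -(branch_child ar ma) -?pr // (branch_child br mb) -?pr ?eqxx.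
rewrite in_cons (negPf p_r) orFb in pa; rewrite in_cons (negPf p_r) orFb in qb.
by have := m_min p; rewrite mem_filter pa qb leNgt (F_lt pm) => /(_ isT).
Qed.

Lemma mem_subtree z :
  reflect (z = r \/ exists2 a, a \in children F r & z \in a :: chain n a) (z \in subtree r).
Proof.
rewrite inE; apply: (iffP orP) => [[/eqP|/flatten_mapP] | [/eqP|/flatten_mapP]];
  by [left | right].
Qed.

Hypothesis r_root : is_root F r.

Lemma subtree_closed : closed (symarc F) (subtree r).
Proof.
suff arc_closed u w : arcrel F u w -> (u \in subtree r) = (w \in subtree r).
  by move=> x y /orP [/arc_closed | /arc_closed ->].
move=> uw; apply/mem_subtree/mem_subtree.
  case=> [ur | [a ar ua]]; right.
    by exists w; rewrite ?mem_head // mem_children -ur.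
  have [p _ pu] := branch_parent ar ua.
  by exists a; rewrite // inE (trail_next (chain_trail a) ua (least_child_nonroot pu uw)) orbT.
case=> [wr | [a ar wa]].
  by move/is_rootP: r_root => /(_ u); rewrite -wr uw.
have [p pa pw] := branch_parent ar wa; rewrite (F_parent_uniq uw pw).
by move: pa; rewrite in_cons => /predU1P [->|pa]; [left | right; exists a].
Qed.

Lemma comp_of_root : comp_of F r =i subtree r.
Proof.
move=> z; rewrite inE; apply/idP/mem_subtree => [rz | [-> | [a ar za]]].
- by apply/mem_subtree; rewrite -(closed_connect subtree_closed rz) mem_head.
- exact: connect0.
- have: path (symarc F) r (a :: chain n a).
    by apply: sub_path (branch_path ar) => x y xy; rewrite /symarc xy.
  by move/path_connect; apply; rewrite inE za orbT.
Qed.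

End Subtree.

Lemma comp_of_has_root y : exists2 r, is_root F r & comp_of F y = comp_of F r.
Proof.
have y_enum : y \in enum (comp_of F y) by rewrite mem_enum comp_of_id.
case: (min_by_valP A (enum (comp_of F y))) => [C0|r]; first by rewrite C0 in y_enum.
rewrite mem_enum => yr r_min; exists r; last by rewrite (comp_of_eq yr).
apply/is_rootP => u; apply/negP => ur.
have yu : u \in comp_of F y.
  by rewrite -(comp_of_eq yr) inE connect_symarc_sym; apply: connect1; rewrite /symarc ur.
by have := r_min u; rewrite mem_enum yu leNgt (F_lt ur) => /(_ isT).
Qed.

Local Notation H := (merge_subtrees A F).

Lemma F_sub_merge : {subset F <= H}.
Proof. by move=> e eF; rewrite mem_cat eF. Qed.

Lemma arcrel_F_merge : subrel (arcrel F) (arcrel H).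
Proof. exact: sub_arcrel F_sub_merge. Qed.

Lemma zigzag_sub_merge r a b : is_root F r -> children F r = [:: a; b] ->
  {subset zigzag A least_child least_child n a b <= H}.
Proof.
move=> r_root rab e e_zig; rewrite /merge_subtrees mem_cat; apply/orP; right.
apply/flatten_mapP; exists r; first by rewrite mem_filter r_root mem_enum.
by rewrite rab; exact: e_zig.
Qed.

Lemma merge_subtreesP u w : arcrel H u w -> arcrel F u w \/
  exists r a b,
    [/\ is_root F r, children F r = [:: a; b]
       & (u, w) \in zigzag A least_child least_child n a b].
Proof.
rewrite /merge_subtrees arcrel_cat => /orP [->|]; first by left.
case/flatten_mapP => r; rewrite mem_filter => /andP [r_root _].
by case rab: (children F r) => [|a [|b [|]]] // uw; right; exists r, a, b.
Qed.

Lemma two_children r a b : children F r = [:: a; b] ->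
  [/\ a \in children F r, b \in children F r & a != b].
Proof.
move=> rab; have := uniq_children r.
by rewrite rab /= !inE andbT => ab; rewrite ab !eqxx orbT.
Qed.

Lemma merge_subtrees_lt u w : arcrel H u w -> A u < A w.
Proof.
case/merge_subtreesP => [/F_lt //| [r [a [b [r_root rab uw]]]]].
have [ar br ab] := two_children rab.
by have [] := zigzag_arc A_inj (chain_trail a) (chain_trail b)
  (branches_disjoint ar br ab) uw.
Qed.

Lemma merge_subtrees_connect u w : arcrel H u w -> connect (symarc F) u w.
Proof.
case/merge_subtreesP => [uw | [r [a [b [r_root rab uw]]]]].
  by apply: connect1; rewrite /symarc uw.
have [ar br ab] := two_children rab.
have [u_ab w_ab _] := zigzag_arc A_inj (chain_trail a) (chain_trail b)
  (branches_disjoint ar br ab) uw.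
have in_comp z : z \in a :: chain n a ++ b :: chain n b -> z \in comp_of F r.
  by move=> z_ab; rewrite comp_of_root // /subtree rab /= cats0 inE z_ab orbT.
by have := in_comp _ w_ab; rewrite -(comp_of_eq (in_comp _ u_ab)) inE.
Qed.

Lemma comp_of_merge y : comp_of H y = comp_of F y.
Proof.
apply/setP => z; rewrite !inE; apply/idP/idP; apply: connect_sub => u w /orP [] uw.
- exact: merge_subtrees_connect.
- by rewrite connect_symarc_sym; apply: merge_subtrees_connect.
- by apply: connect1; rewrite /symarc (arcrel_F_merge uw).
- by apply: connect1; rewrite /symarc (arcrel_F_merge uw) orbT.
Qed.

Lemma subtree_traced r : is_root F r ->
  exists s, path (arcrel H) r s /\ r :: s =i subtree r.
Proof.
move=> r_root; rewrite /subtree.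
have r_arc c : c \in children F r -> arcrel H r c.
  by rewrite mem_children; apply: arcrel_F_merge.
case rch: (children F r) (size_children r) => [|a [|b [|//]]] _.
- by exists [::].
- exists (a :: chain n a); split => [|z]; last by rewrite /= cats0.
  by rewrite /= r_arc ?rch ?mem_head // (sub_path arcrel_F_merge (chain_path n a)).
have [ar br ab] := two_children rch.
have ab_uniq : uniq (a :: chain n a ++ b :: chain n b).
  rewrite -cat_cons cat_uniq !chain_uniq andbT.
  by apply/hasPn => z; apply: branches_disjoint br ar _ z; rewrite eq_sym.
have size_ab : (size (chain n a) + size (chain n b) < n)%N.
  by have := uniq_size_ord ab_uniq; rewrite /= size_cat /=; lia.
have [u [perm_u path_u]] := zigzag_path A (chain_trail a) (chain_trail b)
  (chain_path n a) (chain_path n b) size_ab.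
exists ((if A a < A b then a else b) :: u); split => [|z]; last first.
  by rewrite /= cats0 ![z \in r :: _]in_cons (perm_mem perm_u).
rewrite /= (sub_path _ path_u) ?andbT.
  by case: ifP; rewrite r_arc ?rch ?mem_head ?inE ?eqxx ?orbT.
apply: sub_arcrel => e; rewrite mem_cat => /orP [/F_sub_merge // | ].
exact: zigzag_sub_merge r_root rch e.
Qed.

Lemma merge_subtrees_traced : traced_components H.
Proof.
move=> y; rewrite comp_of_merge; have [r r_root ->] := comp_of_has_root y.
have [s [Hs sr]] := subtree_traced r_root.
by exists r, s; split => // z; rewrite sr comp_of_root.
Qed.

End Forest.

Section ComponentMerge.
Variables (R : realType) (n : nat) (A : 'I_n -> R).
Hypothesis A_inj : injective A.
Local Notation V := 'I_n.
Variable H : seq (V * V).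
Hypothesis H_lt : forall u w, arcrel H u w -> A u < A w.

Definition next_in (C : {set V}) (v : V) : option V :=
  min_by_val A [seq w <- enum V | arcrel H v w & w \in C].

Lemma traced_min (C : {set V}) x s : path (arcrel H) x s -> x :: s =i C ->
  min_by_val A (enum C) = Some x.
Proof.
move=> Hs sC; apply: (min_by_val_eq A_inj); rewrite ?mem_enum -?sC ?mem_head // => y.
rewrite mem_enum -sC inE => /predU1P [->//|ys].
exact/ltW/(increasing_head_lt (sub_path H_lt Hs)).
Qed.

Lemma traced_trail (C : {set V}) x s :
  path (arcrel H) x s -> x :: s =i C -> trail (next_in C) x s.
Proof.
move=> Hs sC; have sub_C : {subset x :: s <= C} by move=> z; rewrite sC.
have above_x w : w \in C -> A x < A w -> w \in s.
  by rewrite -sC inE => /predU1P [->|//]; rewrite ltxx.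
elim: s x Hs {sC} sub_C above_x => [|y s IHs] x /= Hs sub_C above_x.
  rewrite /next_in; case: min_by_valP => // m.
  rewrite mem_filter mem_enum andbT => /andP [xm mC] _.
  by have := above_x m mC (H_lt xm).
case/andP: Hs => xy Hy; split.
  apply: (min_by_val_eq A_inj) => [|w].
    by rewrite mem_filter mem_enum xy sub_C // inE mem_head orbT.
  rewrite mem_filter mem_enum andbT => /andP [xw wC].
  have := above_x w wC (H_lt xw); rewrite inE => /predU1P [->//|ws].
  exact/ltW/(increasing_head_lt (sub_path H_lt Hy)).
apply: IHs => // [z zs | w wC yw]; first by apply: sub_C; rewrite inE zs orbT.
have := above_x w wC (lt_trans (H_lt xy) yw); rewrite inE => /predU1P [wy|//].
by move: yw; rewrite wy ltxx.
Qed.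

Lemma comp_merge_hamiltonian (C D : {set V}) x s y t :
  path (arcrel H) x s -> x :: s =i C -> path (arcrel H) y t -> y :: t =i D ->
  {in C, forall z, z \notin D} ->
  exists (x' : V) (u : seq V),
    [/\ uniq (x' :: u), forall v, (v \in x' :: u) = (v \in C :|: D)
      & path (arcrel (H ++ comp_merge_arcs A H C D)) x' u].
Proof.
move=> Hs sC Ht tD CD.
have -> : comp_merge_arcs A H C D = zigzag A (next_in C) (next_in D) n x y.
  by rewrite /comp_merge_arcs (traced_min Hs sC) (traced_min Ht tD).
have st_uniq : uniq (x :: s ++ y :: t).
  have uniq_path z r : path (arcrel H) z r -> uniq (z :: r).
    by move/(sub_path H_lt)/increasing_uniq.
  rewrite -cat_cons cat_uniq !uniq_path // andbT.
  by apply/hasPn => z; rewrite sC tD; apply: contraL => /CD.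
have size_st : (size s + size t < n)%N.
  by have := uniq_size_ord st_uniq; rewrite /= size_cat /=; lia.
have [u [perm_u path_u]] :=
  zigzag_path A (traced_trail Hs sC) (traced_trail Ht tD) Hs Ht size_st.
exists (if A x < A y then x else y), u; split => //; first by rewrite (perm_uniq perm_u).
by move=> v; rewrite (perm_mem perm_u) -cat_cons mem_cat sC tD in_setU.
Qed.

End ComponentMerge.

Theorem theorem10 (R : realType) (n : nat) (A : 'I_n -> R)
    (order : seq 'I_n) (H : seq ('I_n * 'I_n)) (C D : {set 'I_n}) :
  injective A ->
  (forall v, v \in order) ->
  let F := dfs_forest A order in
  (all_comps_dipaths F -> H = F) ->
  (~ all_comps_dipaths F -> H = merge_subtrees A F) ->
  is_component H C -> is_component H D -> C != D ->
  exists (x : 'I_n) (s : seq 'I_n),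
    [/\ uniq (x :: s),
        forall v, (v \in x :: s) = (v \in C :|: D)
      & path (arcrel (H ++ comp_merge_arcs A H C D)) x s].
Proof.
(* the argument works for any visiting list *)
move=> A_inj _ F F_H merge_H [yc ->] [yd ->] CD.
have F_reach1 := @dfs_forest_reach1 _ _ A order.
have F_parent_uniq := @dfs_forest_parent_uniq _ _ A order.
have [H_lt H_traced] : (forall u w, arcrel H u w -> A u < A w) /\ traced_components H.
  case: (classic (all_comps_dipaths F)) => [dipaths | not_dipaths].
    by rewrite (F_H dipaths); split; [apply: F_lt F_reach1 | apply: dipaths_traced].
  rewrite (merge_H not_dipaths); split; first exact: merge_subtrees_lt.
  exact: merge_subtrees_traced.
have [x [s [Hs sC]]] := H_traced yc.
have [y [t [Ht tD]]] := H_traced yd.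
have [z zC|x' [u hamiltonian]] := comp_merge_hamiltonian A_inj H_lt Hs sC Ht tD.
  exact: comp_of_disjoint CD zC.
by exists x', u.
Qed.
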